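(* For any $X\in T^1(\Sigma)$ the following are equivalent: (i) $X$ is an idempotent tree (its start vertex equals its end vertex); (ii) $X$ is idempotent under pruned multiplication, i.e. $XX=X$; (iii) $X=X^+$; (iv) $X=Y^+$ for some $Y\in T^1(\Sigma)$; (v) $X=X^*$; (vi) $X=Y^*$ for some $Y\in T^1(\Sigma)$.
   Context: Let $\Sigma$ be a set. A $\Sigma$-tree is a finite directed graph whose underlying undirected graph is a tree, edges labelled by elements of $\Sigma$, with distinguished start and end vertices such that there is a (possibly empty) directed path from start to end vertex. A morphism $X\to Y$ maps vertices to vertices and edges to edges, preserving initial vertex, terminal vertex and label of each edge, and mapping start/end vertex to start/end vertex; isomorphisms are morphisms bijective on vertices and edges. A retraction is an idempotent morphism $X\to X$, its image a retract; $X$ is pruned if it admits no non-identity retraction. Every tree $X$ has a pruned retract, unique up to isomorphism, whose isomorphism type is $\overline{X}$. $T^1(\Sigma)$ is the set of isomorphism types of pruned $\Sigma$-trees. Unpruned operations: $X\times Y$ identifies the end vertex of (a copy of) $X$ with the start vertex of (a disjoint copy of) $Y$, start vertex that of $X$, end vertex that of $Y$; $X^{(+)}$ is $X$ with end vertex moved to the start vertex; $X^{( * )}$ is $X$ with start vertex moved to the end vertex. Pruned operations: $XY=\overline{X\times Y}$, $X^+=\overline{X^{(+)}}$, $X^*=\overline{X^{( * )}}$. *)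

From Stdlib Require Import Relation_Operators.
From mathcomp Require Import all_boot.
Set Implicit Arguments. Unset Strict Implicit. Unset Printing Implicit Defensive.

(* The tree conditions are imposed separately by [valid_tree]. *)
Record sigma_tree (S : Type) := STree {
  vert : finType;
  edge : finType;
  src : edge -> vert;
  tgt : edge -> vert;
  lab : edge -> S;
  stv : vert;
  env : vert
}.

Section Trees.
Variable S : Type.
Implicit Types X Y Z : sigma_tree S.

Definition uadj X (u v : vert X) : Prop :=
  exists e : edge X, (src e = u /\ tgt e = v) \/ (src e = v /\ tgt e = u).

Definition dadj X (u v : vert X) : Prop :=
  exists e : edge X, src e = u /\ tgt e = v.

Definition underlying_tree X : Prop :=
  (forall u v : vert X, clos_refl_trans _ (@uadj X) u v) /\
  #|edge X|.+1 = #|vert X|.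

Definition valid_tree X : Prop :=
  underlying_tree X /\ clos_refl_trans _ (@dadj X) (stv X) (env X).

Definition is_mor X Y (fv : vert X -> vert Y) (fe : edge X -> edge Y) : Prop :=
  [/\ forall e, src (fe e) = fv (src e),
      forall e, tgt (fe e) = fv (tgt e),
      forall e, lab (fe e) = lab e,
      fv (stv X) = stv Y &
      fv (env X) = env Y].

Definition is_iso X Y : Prop :=
  exists fv fe, [/\ @is_mor X Y fv fe, bijective fv & bijective fe].

Definition is_retraction X (fv : vert X -> vert X) (fe : edge X -> edge X) : Prop :=
  [/\ is_mor fv fe, forall v, fv (fv v) = fv v & forall e, fe (fe e) = fe e].

Definition pruned X : Prop :=
  forall fv fe, @is_retraction X fv fe ->
    (forall v, fv v = v) /\ (forall e, fe e = e).

(* elements of T^1(S) are represented by pruned Sigma-trees *)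
Definition in_T1 X : Prop := valid_tree X /\ pruned X.

(* Y is isomorphic to a retract of Z (image of a retraction of Z):
   equivalently, there are morphisms i : Y -> Z, p : Z -> Y with p o i = id. *)
Definition retract_of Y Z : Prop :=
  exists (iv : vert Y -> vert Z) (ie : edge Y -> edge Z)
         (pv : vert Z -> vert Y) (pe : edge Z -> edge Y),
    [/\ is_mor iv ie, is_mor pv pe,
        forall v, pv (iv v) = v & forall e, pe (ie e) = e].

(* [prune_is Z X] : the isomorphism type overline(Z) equals the class of X,
   i.e. X is (isomorphic to) a pruned retract of Z. *)
Definition prune_is Z X : Prop := in_T1 X /\ retract_of X Z.

Definition tplus X : sigma_tree S :=
  @STree S (vert X) (edge X) (@src S X) (@tgt S X) (@lab S X) (stv X) (stv X).

Definition tstar X : sigma_tree S :=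
  @STree S (vert X) (edge X) (@src S X) (@tgt S X) (@lab S X) (env X) (env X).

Section Prod.
Variables X Y : sigma_tree S.

(* vertices of X x Y: those of X, plus those of Y other than its start vertex,
   which is identified with the end vertex of X *)
Definition pvert : finType := (vert X + {y : vert Y | y != stv Y})%type.

Definition inY (y : vert Y) : pvert :=
  match @idP (y != stv Y) with
  | ReflectT h => inr (exist _ y h)
  | ReflectF _ => inl (env X)
  end.

Definition pedge : finType := (edge X + edge Y)%type.

Definition psrc (e : pedge) : pvert :=
  match e with inl e => inl (src e) | inr e => inY (src e) end.
Definition ptgt (e : pedge) : pvert :=
  match e with inl e => inl (tgt e) | inr e => inY (tgt e) end.
Definition plab (e : pedge) : S :=
  match e with inl e => lab e | inr e => lab e end.

Definition tprod : sigma_tree S :=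
  @STree S pvert pedge psrc ptgt plab (inl (stv X)) (inY (env Y)).
End Prod.

End Trees.

From Stdlib Require Import Relation_Operators ZArith Lia.
From mathcomp Require Import all_boot zify.
Set Implicit Arguments. Unset Strict Implicit. Unset Printing Implicit Defensive.

(* A tree carries a height function increasing by one along every edge, and
   morphisms preserve height differences along directed paths.  In X x X the
   directed path from start to end is twice as high as in X, so a morphism
   X -> X x X forces the start-to-end path of X to have height zero, i.e. the
   start and end vertices coincide.  Conversely, for such X the product X x X
   folds back onto X, and moving the start or end vertex onto the other one
   changes nothing.  Finally, a morphism out of a tree whose start and end
   vertices coincide lands in a tree with the same property. *)

Definition merge_class (T : eqType) (c : T -> T) (a b : T) (v : T) : T :=
  if c v == b then a else c v.

Section MergeClass.
Variables (T : finType) (c : T -> T) (a b : T).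
Hypotheses (c_idem : forall v, c (c v) = c v) (ca : c a = a) (cb : c b = b).
Hypothesis neq_ab : a != b.

Lemma merge_class_idem v :
  merge_class c a b (merge_class c a b v) = merge_class c a b v.
Proof.
rewrite /merge_class; case: (eqVneq (c v) b) => Hv; first by rewrite ca (negbTE neq_ab).
by rewrite c_idem (negbTE Hv).
Qed.

Lemma card_fix_merge_class :
  #|[pred v | merge_class c a b v == v]|.+1 = #|[pred v | c v == v]|.
Proof.
rewrite (cardD1 b [pred v | c v == v]) inE /= cb eqxx add1n; congr _.+1.
apply: eq_card => v; rewrite !inE /merge_class.
case: (eqVneq v b) => [->|Hvb] /=; first by rewrite cb eqxx (negbTE neq_ab).
case: (eqVneq (c v) b) => [Hv|//].
rewrite Hv [b == v]eq_sym (negbTE Hvb); apply/eqP => Hav.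
by move: neq_ab Hv; rewrite -Hav ca => /eqP.
Qed.

End MergeClass.

Section Potential.
Variables (S : Type) (X : sigma_tree S) (w : edge X -> Z).

(* Kruskal-style invariant: [c] picks a representative of the components
   spanned by [s]; when no edge of [s] closed a cycle the count is tight and
   the heights [h] are consistent along [s]. *)
Lemma partial_potential (s : seq (edge X)) :
  exists (c : vert X -> vert X) (h : vert X -> Z),
  [/\ forall v, c (c v) = c v,
      forall e, e \in s -> c (src e) = c (tgt e),
      #|vert X| <= #|[pred v | c v == v]| + size s &
      #|vert X| = #|[pred v | c v == v]| + size s ->
        forall e, e \in s -> h (tgt e) = (h (src e) + w e)%Z].
Proof.
elim: s => [|e s [c [h [c_idem c_s le_card tight_h]]]].
  exists id, (fun _ => 0%Z); split => //.
  by rewrite addn0; apply: subset_leq_card; apply/subsetP => v _; rewrite inE /=.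
set a := c (src e); set b := c (tgt e).
have [Hab|neq_ab] := eqVneq a b.
  exists c, h; split => //.
  - by move=> e'; rewrite in_cons => /orP [/eqP -> //|]; apply: c_s.
  - by rewrite /= addnS; apply: leqW.
  - by rewrite /= addnS => Hq; move: le_card; rewrite Hq; lia.
have ca : c a = a by rewrite /a c_idem.
have cb : c b = b by rewrite /b c_idem.
have Hcard := card_fix_merge_class ca cb neq_ab.
pose h' v := if c v == b then (h v + (h (src e) + w e - h (tgt e)))%Z else h v.
exists (merge_class c a b), h'; split.
- exact: merge_class_idem.
- move=> e'; rewrite in_cons /merge_class => /orP [/eqP ->|He].
    by rewrite -/a -/b eqxx (negbTE neq_ab).
  by rewrite (c_s _ He).
- by rewrite /= addnS -addSn Hcard.
- rewrite /= addnS -addSn Hcard => tight e'.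
  rewrite in_cons /h' => /orP [/eqP ->|He].
    by rewrite -/a -/b eqxx (negbTE neq_ab); lia.
  rewrite (c_s _ He) (tight_h tight _ He); case: (c (tgt e') == b); lia.
Qed.

Lemma uadj_rt_const (c : vert X -> vert X) :
  (forall e, c (src e) = c (tgt e)) ->
  forall u v, clos_refl_trans _ (@uadj S X) u v -> c u = c v.
Proof.
move=> c_edge u v; elim => //.
- by move=> x y [e [[<- <-]|[<- <-]]].
- by move=> x y z _ -> _ ->.
Qed.

Lemma tree_potential : underlying_tree X ->
  exists h : vert X -> Z, forall e, h (tgt e) = (h (src e) + w e)%Z.
Proof.
move=> [conn card_edge].
have [c [h [c_idem c_edge le_card tight_h]]] := partial_potential (enum (edge X)).
have {}c_edge e : c (src e) = c (tgt e) by apply: c_edge; rewrite mem_enum.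
have one_root : #|[pred v | c v == v]| <= 1.
  rewrite -(card1 (c (stv X))); apply: subset_leq_card; apply/subsetP => v.
  by rewrite !inE => /eqP <-; apply/eqP/uadj_rt_const.
exists h => e; apply: tight_h; last by rewrite mem_enum.
move: le_card one_root; rewrite -cardE -card_edge.
by set r := #|[pred v | c v == v]|; set m := #|edge X|; lia.
Qed.

End Potential.

Section Height.
Variable S : Type.

Definition height (X : sigma_tree S) (h : vert X -> Z) : Prop :=
  forall e, h (tgt e) = (h (src e) + 1)%Z.

Lemma tree_height (X : sigma_tree S) :
  underlying_tree X -> exists h : vert X -> Z, height h.
Proof. exact: tree_potential. Qed.

Lemma dadj_rt_height_lt (X : sigma_tree S) (h : vert X -> Z) : height h ->
  forall u v, clos_refl_trans _ (@dadj S X) u v -> u = v \/ (h u < h v)%Z.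
Proof.
move=> hh u v; elim.
- by move=> x y [e [<- <-]]; right; rewrite hh; lia.
- by left.
- by move=> x y z _ [->|?] _ [<-|?]; [by left|right|right|right]; lia.
Qed.

Lemma mor_height_diff (X Y : sigma_tree S) (hX : vert X -> Z) (hY : vert Y -> Z)
    fv fe : height hX -> height hY -> is_mor fv fe ->
  forall u v, clos_refl_trans _ (@dadj S X) u v ->
    (hY (fv v) - hY (fv u) = hX v - hX u)%Z.
Proof.
move=> hhX hhY [fsrc ftgt _ _ _] u v; elim.
- by move=> x y [e [<- <-]]; rewrite -fsrc -ftgt hhX hhY; lia.
- by lia.
- by move=> x y z _ ? _ ?; lia.
Qed.

Lemma inY_stv (X Y : sigma_tree S) : inY X (stv Y) = inl (env X).
Proof.
rewrite /inY; destruct (@idP (stv Y != stv Y)) as [ny|] => //.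
by have := ny; rewrite eqxx.
Qed.

Lemma inY_val (X Y : sigma_tree S) y (ny : y != stv Y) :
  inY X y = inr (exist _ y ny).
Proof.
rewrite /inY; destruct (@idP (y != stv Y)) as [ny'|] => //.
by congr (inr (exist _ _ _)); apply: bool_irrelevance.
Qed.

Section ProductHeight.
Variables (X Y : sigma_tree S) (hX : vert X -> Z) (hY : vert Y -> Z).
Hypotheses (hhX : height hX) (hhY : height hY).

(* [Y] is stacked on top of [X]: its start vertex sits at the height of [env X]. *)
Definition tprod_height (p : vert (tprod X Y)) : Z :=
  match p with
  | inl x => hX x
  | inr y => (hY (val y) - hY (stv Y) + hX (env X))%Z
  end.

Lemma tprod_height_inY y :
  tprod_height (inY X y) = (hY y - hY (stv Y) + hX (env X))%Z.
Proof.
have [->|ny] := eqVneq y (stv Y); first by rewrite inY_stv /=; lia.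
by rewrite (inY_val X ny).
Qed.

Lemma height_tprod : height tprod_height.
Proof. by case=> e /=; rewrite ?hhX // !tprod_height_inY hhY; lia. Qed.

End ProductHeight.

Lemma mor_tprod_self_loop (X : sigma_tree S) fv fe :
  valid_tree X -> @is_mor S X (tprod X X) fv fe -> stv X = env X.
Proof.
move=> [/tree_height [h hh] path] fmor.
have := mor_height_diff hh (height_tprod hh hh) fmor path.
case: (fmor) => _ _ _ -> ->; rewrite /= tprod_height_inY => same_diff.
by have [//|] := dadj_rt_height_lt hh path; lia.
Qed.

End Height.

Section Loops.
Variable S : Type.

Lemma mor_loop (X Y : sigma_tree S) fv fe :
  @is_mor S X Y fv fe -> stv X = env X -> stv Y = env Y.
Proof. by case=> _ _ _ <- <- ->. Qed.

Lemma retract_of_loop (X Y : sigma_tree S) :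
  retract_of X Y -> stv Y = env Y -> stv X = env X.
Proof. by case=> _ [_ [pv [pe [_ pmor _ _]]]]; apply: mor_loop pmor. Qed.

Lemma retract_of_tplus (X : sigma_tree S) : stv X = env X -> retract_of X (tplus X).
Proof. by move=> loop; exists id, id, id, id; split. Qed.

Lemma retract_of_tstar (X : sigma_tree S) : stv X = env X -> retract_of X (tstar X).
Proof. by move=> loop; exists id, id, id, id; split. Qed.

(* For a loop, X x X is two copies of X glued at the common start/end vertex;
   folding the second copy onto the first is the retraction. *)
Lemma retract_of_tprod_self (X : sigma_tree S) :
  stv X = env X -> retract_of X (tprod X X).
Proof.
move=> loop.
pose pv (p : pvert X X) : vert X := match p with inl x => x | inr y => val y end.
pose pe (p : pedge X X) : edge X := match p with inl e => e | inr e => e end.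
have pv_inY y : pv (inY X y) = y.
  have [->|ny] := eqVneq y (stv X); first by rewrite inY_stv.
  by rewrite (inY_val X ny).
exists inl, inl, pv, pe; split => //.
- by split => //=; rewrite -[in RHS]loop inY_stv.
- by split=> [[e|e]|[e|e]|[]||] //=; rewrite pv_inY.
Qed.

End Loops.

Theorem proposition4p8 (S : Type) (X : sigma_tree S) :
  in_T1 X ->
  [<-> stv X = env X;
       prune_is (tprod X X) X;
       prune_is (tplus X) X;
       exists Y : sigma_tree S, in_T1 Y /\ prune_is (tplus Y) X;
       prune_is (tstar X) X;
       exists Y : sigma_tree S, in_T1 Y /\ prune_is (tstar Y) X].
Proof.
move=> T1X; tfae.
- by move=> loop; split; last exact: retract_of_tprod_self.
- case=> [[validX _] [iv [ie [_ [_ [imor _ _ _]]]]]].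
  by split; last exact/retract_of_tplus/(mor_tprod_self_loop validX imor).
- by move=> plus; exists X.
- by case=> Y [_ [_ /retract_of_loop loop]]; split; last exact/retract_of_tstar/loop.
- by move=> star; exists X.
- by case=> Y [_ [_ /retract_of_loop]]; apply.
Qed.
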